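(* Let $\tau$ be a primitive, aperiodic substitution and let $g_1,g_2$ be generators for $\tau$. Then $g_1^*\sim_r g_2^*$ holds if and only if there exist generators $g_1'\sim_G g_1$ and $g_2'\sim_G g_2$ whose right wings are identical.
   Context: Let $\mathcal{A}$ be a finite nonempty alphabet, $\mathcal{A}^*$ the finite words over $\mathcal{A}$ (including the empty word), $\mathcal{A}^+$ the nonempty words, $|u|$ the length of $u$. A word $u$ is a factor of $v$ if $v=w_1uw_2$ for some words $w_1,w_2$. A substitution is a map $\tau:\mathcal{A}\to\mathcal{A}^+$ extended to a concatenation-respecting map on words and letterwise to sequences. For $x\in\mathcal{A}^{\mathbb{Z}}$, $x_{[i]}$ denotes the letter at index $i$ and $x_{[i,j]}$ the word $x_{[i]}\cdots x_{[j]}$. The language $\mathcal{L}(\tau)$ is the set of words that are factors of $\tau^n(a)$ for some letter $a$ and some $n\ge1$; $X_\tau=\{x\in\mathcal{A}^{\mathbb{Z}}: x_{[i,j]}\in\mathcal{L}(\tau)\ \forall i\le j\}$. $\tau$ is primitive if there is $n\ge1$ such that every letter $b$ is a factor of $\tau^n(a)$ for every letter $a$, and there is a letter $a$ such that for every $N$ there is $n$ with $|\tau^n(a)|>N$; a primitive $\tau$ is aperiodic if $X_\tau$ is infinite. A generator for $\tau$ is a triple $(v,u,w)$ with $v,u,w\in\mathcal{A}^+$, $u\in\mathcal{L}(\tau)$ and $\tau(u)=vuw$; $v$, $u$, $w$ are its left wing, center and right wing, and its length is $|u|$. Its completion $(v,u,w)^*\in X_\tau$ is the two-sided sequence $\cdots\tau^2(v)\tau(v)vu.w\tau(w)\tau^2(w)\cdots$,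 i.e. the left-infinite word $\cdots\tau^2(v)\tau(v)vu$ occupies the negative indices, ending at index $-1$, and the right-infinite word $w\tau(w)\tau^2(w)\cdots$ occupies the indices $\ge0$, starting at index $0$. If $(v,u,cw)$ is a generator with $c\in\mathcal{A}$, $w\in\mathcal{A}^*$, its right extension is the generator $(v,uc,w\tau(c))$; if $(vc,u,w)$ is a generator with $c\in\mathcal{A}$, $v\in\mathcal{A}^*$, its left extension is the generator $(\tau(c)v,cu,w)$. Two generators $g_1,g_2$ are G related ($g_1\sim_G g_2$) if there is a generator $g_3$ obtainable from $g_1$ and also from $g_2$ by finite (possibly empty) sequences of left and right extensions. For $x,y\in X_\tau$, $x\sim_r y$ (right tail equivalence) means there are $m,M\in\mathbb{Z}$ with $x_{[i]}=y_{[i+m]}$ for all $i\ge M$. *)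

From mathcomp Require Import all_boot all_order all_algebra.
Set Implicit Arguments. Unset Strict Implicit. Unset Printing Implicit Defensive.

Section Subst.
Variable A : finType.
Variable tau : A -> seq A.

Definition subst (s : seq A) : seq A := flatten (map tau s).
Definition substn (n : nat) (s : seq A) : seq A := iter n subst s.

Definition in_lang (u : seq A) : Prop :=
  exists (a : A) (n : nat), 0 < n /\ infix u (substn n [:: a]).

Definition window (x : int -> A) (i j : int) : seq A :=
  mkseq (fun k => x (i + (k%:Z))%R) (absz (j - i)%R).+1.

Definition in_X (x : int -> A) : Prop :=
  forall i j : int, (i <= j)%R -> in_lang (window x i j).

Definition primitive : Prop :=
  (forall a, tau a <> [::]) /\
  (exists n, 0 < n /\ forall a b : A, b \in substn n [:: a]) /\
  (exists a : A, forall N, exists n, N < size (substn n [:: a])).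

(* X_tau infinite *)
Definition aperiodic : Prop :=
  primitive /\ ~ exists (n : nat) (f : 'I_n -> (int -> A)), forall x, in_X x -> exists i, f i = x.

Definition gen_triple := (seq A * seq A * seq A)%type.
Definition lwing (g : gen_triple) := g.1.1.
Definition center (g : gen_triple) := g.1.2.
Definition rwing (g : gen_triple) := g.2.

Definition generator (g : gen_triple) : Prop :=
  let: (v, u, w) := g in
  v <> [::] /\ u <> [::] /\ w <> [::] /\ in_lang u /\ subst u = v ++ u ++ w.

(* right-infinite word w tau(w) tau^2(w) ... : prefix of length >= n+1 *)
Definition right_prefix (w : seq A) (n : nat) : seq A :=
  flatten [seq substn j w | j <- iota 0 n.+1].
(* reversed left-infinite word ... tau(v) v u, read from index -1 leftwards *)
Definition left_prefix (v u : seq A) (n : nat) : seq A :=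
  rev u ++ flatten [seq rev (substn j v) | j <- iota 0 n.+1].

(* completion (v,u,w)^*; a0 is an irrelevant default letter *)
Definition completion (a0 : A) (g : gen_triple) : int -> A :=
  let: (v, u, w) := g in
  fun i => match i with
           | Posz n => nth a0 (right_prefix w n) n
           | Negz n => nth a0 (left_prefix v u n) n  (* index -(n+1) *)
           end.

Definition ext_step (g g' : gen_triple) : Prop :=
  (exists v u c w, g = (v, u, c :: w) /\ g' = (v, rcons u c, w ++ tau c)) \/
  (exists v c u w, g = (rcons v c, u, w) /\ g' = (tau c ++ v, c :: u, w)).

Inductive ext_reach : gen_triple -> gen_triple -> Prop :=
| ext_refl g : ext_reach g g
| ext_trans g g' g'' : ext_step g g' -> ext_reach g' g'' -> ext_reach g g''.

Definition G_related (g1 g2 : gen_triple) : Prop :=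
  generator g1 /\ generator g2 /\
  exists g3, generator g3 /\ ext_reach g1 g3 /\ ext_reach g2 g3.

Definition right_tail_eq (x y : int -> A) : Prop :=
  exists m M : int, forall i : int, (M <= i)%R -> x i = y (i + m)%R.

End Subst.

From mathcomp Require Import all_boot all_order all_algebra.
From mathcomp Require Import zify.
From Stdlib Require Import FunctionalExtensionality.
Import GRing.Theory.
Set Implicit Arguments. Unset Strict Implicit. Unset Printing Implicit Defensive.

(* An extension step (v, u, c w) -> (v, u c, w tau(c)) shifts the right half
   W = w tau(w) tau^2(w) ... of the completion by one letter. Hence G-related
   generators have right halves that agree up to a shift, and conversely a
   generator can be right-extended to cut off any finite prefix of its right
   half; so everything reduces to showing that W determines the wing w.
   Since W = w tau(W), two wings w1, w2 with the same W give
   W(|w1| + k) = W(|w2| + k) for all k, so W is eventually periodic unless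
   |w1| = |w2|. But by primitivity every word of the language occurs in W
   arbitrarily far out, so every point of X_tau would then be a shift of a
   single periodic sequence, and X_tau would be finite. *)

Definition shift_equiv (T : Type) (f g : nat -> T) : Prop :=
  exists s t, forall n, f (n + s) = g (n + t).

Lemma shift_equiv_sym (T : Type) (f g : nat -> T) :
  shift_equiv f g -> shift_equiv g f.
Proof. by move=> [s [t E]]; exists t, s => n; rewrite E. Qed.

Lemma shift_equiv_trans (T : Type) (f g h : nat -> T) :
  shift_equiv f g -> shift_equiv g h -> shift_equiv f h.
Proof.
move=> [s [t Efg]] [s' [t' Egh]]; exists (s + s'), (t + t') => n.
by rewrite (addnC s) addnA Efg addnAC Egh -addnA.
Qed.

Lemma eventually_periodic_modn (T : Type) (f : nat -> T) a p :
  (forall k, f (a + k) = f (a + p + k)) -> forall k, f (a + k) = f (a + k %% p).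
Proof.
move=> f_per k; rewrite {1}(divn_eq k p).
elim: (k %/ p) => [|q IH]; first by rewrite mul0n add0n.
by rewrite mulSn -[p + _ + _]addnA addnA -f_per IH.
Qed.

(* The windows of [x] only pin down a shift [e] modulo [p] each, but a single
   window of radius [p] already fixes that residue for all larger windows. *)
Lemma shift_of_periodic_windows (T : Type) (Q x : int -> T) (p : nat) :
  0 < p -> (forall z, Q (z %% p)%Z = Q z) ->
  (forall n : nat, exists e : int,
     forall i : int, (- n%:Z <= i <= n)%R -> x i = Q (e + i)%R) ->
  exists r : 'I_p, x = fun i => Q (i + r)%R.
Proof.
move=> p_gt0 Qmod win.
have Qshift d z : Q (d + z)%R = Q (d + (z %% p)%Z)%R.
  by rewrite -[LHS]Qmod -modzDmr Qmod.
have mod_range z : (0 <= (z %% p)%Z)%R /\ ((z %% p)%Z < p)%R.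
  by split; [apply: modz_ge0 | apply: ltz_pmod]; lia.
have [e0 He0] := win p.
have xE i : x i = Q (e0 + i)%R.
  have [e He] := win (maxn p `|i|).
  have same_shift z : Q (e + z)%R = Q (e0 + z)%R.
    by rewrite Qshift [RHS]Qshift -He ?He0 //; have := mod_range z; lia.
  by rewrite -same_shift He //; lia.
have [r_ge0 r_lt] := mod_range e0.
have r_ord : `|(e0 %% p)%Z| < p by lia.
exists (Ordinal r_ord); apply: functional_extensionality => i.
by rewrite xE addrC [LHS]Qshift /=; congr Q; lia.
Qed.

Section Nonerasing.

Variables (A : finType) (tau : A -> seq A).

Lemma subst_cat s t : subst tau (s ++ t) = subst tau s ++ subst tau t.
Proof. by rewrite /subst map_cat flatten_cat. Qed.

Lemma substn_cat n s t :
  substn tau n (s ++ t) = substn tau n s ++ substn tau n t.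
Proof. by elim: n => //= n IH; rewrite /substn /= -!/(substn _ _ _) IH subst_cat. Qed.

Lemma substnD m n s : substn tau (m + n) s = substn tau m (substn tau n s).
Proof. by rewrite /substn iterD. Qed.

Lemma infix_subst u s : infix u s -> infix (subst tau u) (subst tau s).
Proof. by move/infixP=> [s1 [s2 ->]]; rewrite !subst_cat infix_infix. Qed.

Lemma infix_substn_mem n c s :
  c \in s -> infix (substn tau n [:: c]) (substn tau n s).
Proof. by case/splitPr=> s1 s2; rewrite -[c :: s2]cat1s !substn_cat infix_infix. Qed.

Lemma right_prefix0 w : right_prefix tau w 0 = w.
Proof. by rewrite /right_prefix /= cats0. Qed.

Lemma right_prefixS w n :
  right_prefix tau w n.+1 = w ++ subst tau (right_prefix tau w n).
Proof.
have subst_iota m k : subst tau (flatten [seq substn tau j w | j <- iota m k]) =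
                      flatten [seq substn tau j w | j <- iota m.+1 k].
  by elim: k m => //= k IH m; rewrite subst_cat IH.
by rewrite /right_prefix subst_iota.
Qed.

Lemma right_prefixSr w n :
  right_prefix tau w n.+1 = right_prefix tau w n ++ substn tau n.+1 w.
Proof. by rewrite /right_prefix -addn1 iotaD map_cat flatten_cat /= cats0. Qed.

Lemma prefix_right_prefix w m n :
  m <= n -> prefix (right_prefix tau w m) (right_prefix tau w n).
Proof.
move/subnKC <-; elim: (n - m) => [|d IH]; first by rewrite addn0 prefix_refl.
by rewrite addnS right_prefixSr prefix_catl.
Qed.

Lemma right_prefix_cons c w n :
  right_prefix tau (c :: w) n.+1 =
  c :: right_prefix tau (w ++ tau c) n ++ substn tau n.+1 w.
Proof.
elim: n => [|n IH]; first by rewrite right_prefixS !right_prefix0 /= -catA.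
have subst_cons s : subst tau (c :: s) = tau c ++ subst tau s by [].
rewrite right_prefixS IH /= subst_cons subst_cat.
by rewrite (right_prefixS (w ++ tau c)) -!catA.
Qed.

Hypothesis tau_nonerasing : forall a, tau a <> [::].
Arguments tau_nonerasing : clear implicits.

Lemma leq_size_subst s : size s <= size (subst tau s).
Proof.
elim: s => //= c s IH; rewrite size_cat.
by case: (tau c) (tau_nonerasing c) => // b t _; rewrite addSn ltnS (leq_trans IH) ?leq_addl.
Qed.

Lemma leq_size_substn n s : size s <= size (substn tau n s).
Proof. by elim: n => //= n IH; apply: leq_trans IH (leq_size_subst _). Qed.

Lemma substn_neq_nil n s : s <> [::] -> substn tau n s <> [::].
Proof. by case: s => // c s _; have := leq_size_substn n (c :: s); case: substn. Qed.

Lemma size_right_prefix_gt w n : w <> [::] -> n < size (right_prefix tau w n).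
Proof.
move=> w_nil; elim: n => [|n IH]; first by rewrite right_prefix0; case: w w_nil.
rewrite right_prefixSr size_cat.
by case: substn (substn_neq_nil (n := n.+1) w_nil) => // *; rewrite /= addnS ltnS; lia.
Qed.

Variable a0 : A.

(* [right_word w] is the right half of any completion with right wing [w]. *)
Definition right_word (w : seq A) (n : nat) : A := nth a0 (right_prefix tau w n) n.

Lemma right_wordE w m k :
  w <> [::] -> k < size (right_prefix tau w m) ->
  right_word w k = nth a0 (right_prefix tau w m) k.
Proof.
move=> w_nil lt_k; rewrite /right_word.
case: (leqP k m) => [le_km | /ltnW le_mk].
  case/prefixP: (prefix_right_prefix w le_km) => X ->.
  by rewrite [RHS]nth_cat size_right_prefix_gt.
case/prefixP: (prefix_right_prefix w le_mk) => X ->.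
by rewrite [LHS]nth_cat lt_k.
Qed.

Lemma right_word_wing w k : w <> [::] -> k < size w -> right_word w k = nth a0 w k.
Proof. by move=> w_nil lt_k; rewrite (right_wordE (m := 0)) ?right_prefix0. Qed.

Lemma right_word_extension c w n :
  right_word (w ++ tau c) n = right_word (c :: w) n.+1.
Proof.
rewrite /right_word right_prefix_cons /= nth_cat size_right_prefix_gt //.
by case: (tau c) (tau_nonerasing c); case: w.
Qed.

Lemma nth_subst_take s m k :
  k < m -> m <= size s -> nth a0 (subst tau s) k = nth a0 (subst tau (take m s)) k.
Proof.
move=> lt_km le_ms; rewrite -{1}(cat_take_drop m s) subst_cat nth_cat.
rewrite (leq_trans lt_km) // (leq_trans _ (leq_size_subst _)) //.
by rewrite size_take_min (minn_idPl le_ms).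
Qed.

Lemma right_prefix_mkseq w n : w <> [::] ->
  right_prefix tau w n = mkseq (right_word w) (size (right_prefix tau w n)).
Proof.
move=> w_nil; apply: (@eq_from_nth _ a0); first by rewrite size_mkseq.
by move=> i lt_i; rewrite nth_mkseq // (right_wordE w_nil lt_i).
Qed.

Lemma right_word_fixpoint w k : w <> [::] ->
  right_word w (size w + k) = nth a0 (subst tau (mkseq (right_word w) k.+1)) k.
Proof.
move=> w_nil; have lt_k := size_right_prefix_gt k w_nil.
rewrite (right_wordE (m := k.+1)) // right_prefixS; last first.
  by rewrite size_cat ltn_add2l (leq_trans lt_k) ?leq_size_subst.
rewrite nth_cat ltnNge leq_addr /= addKn (nth_subst_take (m := k.+1)) //.
by rewrite {1}(right_prefix_mkseq k w_nil) /mkseq -map_take take_iota (minn_idPl lt_k).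
Qed.

Lemma same_right_word_shift w1 w2 k : w1 <> [::] -> w2 <> [::] ->
  right_word w1 =1 right_word w2 ->
  right_word w1 (size w1 + k) = right_word w1 (size w2 + k).
Proof.
move=> w1_nil w2_nil E.
by rewrite !right_word_fixpoint // E right_word_fixpoint // (eq_mkseq E).
Qed.

Lemma generator_rwing g : generator tau g -> rwing g <> [::].
Proof. by case: g => [[v u] w] [_ [_ []]]. Qed.

Lemma completion_Posz g (n : nat) : completion tau a0 g n%:Z = right_word (rwing g) n.
Proof. by case: g => [[v u] w]. Qed.

Lemma right_tail_eq_completion g1 g2 :
  right_tail_eq (completion tau a0 g1) (completion tau a0 g2) <->
  shift_equiv (right_word (rwing g1)) (right_word (rwing g2)).
Proof.
split=> [[m [M E]] | [s [t E]]].
  exists (`|M| + `|m|)%N, `|((`|M| + `|m|)%N%:Z + m)%R|%N => n.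
  by rewrite -!completion_Posz E; [congr completion | ]; lia.
exists (Posz t - Posz s)%R, (Posz s); case=> [k|k] le_s; last lia.
have -> : (Posz k + (Posz t - Posz s))%R = Posz (k - s + t) by lia.
by rewrite !completion_Posz -E subnK //; lia.
Qed.

Lemma generator_ext_right v u c w :
  generator tau (v, u, c :: w) -> generator tau (v, rcons u c, w ++ tau c).
Proof.
move=> [v_nil [u_nil [_ [[a [n [n_gt0 u_in]]] subst_u]]]].
split=> //; split; first by case: (u) u_nil.
split; first by case: (tau c) (tau_nonerasing c) => // *; case: (w).
split; last by rewrite -cats1 subst_cat subst_u /subst /= cats0 -!catA.
exists a, n.+1; split=> //; apply: infix_trans (infix_subst u_in).
by rewrite subst_u -cat_rcons; apply/infixP; exists v, w.
Qed.

Lemma generator_ext_rightn k g : generator tau g ->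
  exists g', [/\ generator tau g', ext_reach tau g g' &
    forall n, right_word (rwing g') n = right_word (rwing g) (n + k)].
Proof.
elim: k g => [|k IH] g gen_g.
  by exists g; split=> // [|n]; [exact: ext_refl | rewrite addn0].
case: g gen_g => [[v u] [|c w]] gen_g; first by case: gen_g => _ [_ []].
have [g' [gen_g' reach E]] := IH _ (generator_ext_right gen_g).
exists g'; split=> // [|n]; first by apply: ext_trans reach; left; exists v, u, c, w.
by rewrite E /rwing /= right_word_extension addnS.
Qed.

Lemma ext_reach_right_word g h : ext_reach tau g h ->
  exists k, forall n, right_word (rwing g) (n + k) = right_word (rwing h) n.
Proof.
elim=> [g0 | g0 g' g'' step _ [k E]]; first by exists 0 => n; rewrite addn0.
case: step => [[v [u [c [w [-> Eg]]]]] | [v [c [u [w [-> Eg]]]]]]; rewrite {g'}Eg in E.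
  by exists k.+1 => n; rewrite -E /rwing /= right_word_extension addnS.
by exists k.
Qed.

Lemma G_related_shift_equiv g h : G_related tau g h ->
  shift_equiv (right_word (rwing g)) (right_word (rwing h)).
Proof.
move=> [_ [_ [g3 [_ [/ext_reach_right_word [k Eg] /ext_reach_right_word [l Eh]]]]]].
by exists k, l => n; rewrite Eg Eh.
Qed.

Lemma G_related_ext_reach g g' :
  generator tau g -> generator tau g' -> ext_reach tau g g' -> G_related tau g' g.
Proof.
by move=> gen_g gen_g' reach; do 2!split=> //; exists g'; do 2!split=> //; exact: ext_refl.
Qed.

End Nonerasing.

Section Primitive.

Variables (A : finType) (tau : A -> seq A) (a0 : A).
Hypothesis tau_primitive : primitive tau.

Let tau_nonerasing : forall a, tau a <> [::] := tau_primitive.1.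

Lemma right_word_occurs w u N : w <> [::] -> in_lang tau u ->
  exists s, N <= s /\ forall k, k < size u -> nth a0 u k = right_word tau a0 w (s + k).
Proof.
move=> w_nil [b [n [_ u_in]]].
have [N0 [N0_gt0 all_in]] := tau_primitive.2.1.
have all_in_substn s : s <> [::] -> b \in substn tau N0 s.
  by case: s => // c s _; rewrite -cat1s substn_cat mem_cat all_in.
pose j := n + N0.-1 + N.
have : infix u (substn tau j.+1 w).
  rewrite (_ : j.+1 = n + N0 + N); last by rewrite /j; lia.
  rewrite !substnD; apply: (infix_trans u_in) (infix_substn_mem _ _ (all_in_substn _ _)).
  exact: substn_neq_nil.
case/infixP=> y1 [y2 Ey].
have := size_right_prefix_gt tau_nonerasing j w_nil.
set P := right_prefix tau w j => lt_j.
have E : right_prefix tau w j.+1 = (P ++ y1) ++ u ++ y2 by rewrite right_prefixSr Ey -!catA.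
exists (size (P ++ y1)).
split=> [|k lt_k]; first by rewrite size_cat; lia.
rewrite (right_wordE tau_nonerasing a0 (m := j.+1)) // E; last by rewrite !size_cat; lia.
by rewrite nth_cat ltnNge leq_addr /= addKn nth_cat lt_k.
Qed.

Lemma in_X_right_word_occurs x w (n N : nat) : in_X tau x -> w <> [::] ->
  exists s, N <= s /\ forall i : int, (- n%:Z <= i <= n)%R ->
    x i = right_word tau a0 w (s + `|(i + n%:Z)%R|%N).
Proof.
move=> Xx w_nil.
have [s [le_Ns occ]] := right_word_occurs N w_nil (Xx (- n%:Z)%R n ltac:(lia)).
exists s; split=> // i range_i.
have lt_i : `|(i + n%:Z)%R|%N < size (window x (- n%:Z) n) by rewrite size_mkseq; lia.
by rewrite -occ // nth_mkseq; [congr (x _) | ]; lia.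
Qed.

Hypothesis tau_aperiodic : aperiodic tau.

Lemma right_word_not_eventually_periodic w a p : w <> [::] -> 0 < p ->
  ~ (forall k, right_word tau a0 w (a + k) = right_word tau a0 w (a + p + k)).
Proof.
move=> w_nil p_gt0 /eventually_periodic_modn Wmod.
case: tau_aperiodic => _; apply; exists p.
pose Q z := right_word tau a0 w (a + `|(z %% p)%Z|).
have QE (m : nat) : Q m = right_word tau a0 w (a + m) by rewrite /Q modz_nat absz_nat [RHS]Wmod.
have Qmod z : Q (z %% p)%Z = Q z by rewrite /Q modz_mod.
exists (fun (r : 'I_p) (i : int) => Q (i + r%:Z)%R) => x Xx.
have [r ->] : exists r : 'I_p, x = fun i => Q (i + r%:Z)%R.
  apply: shift_of_periodic_windows => // n.
  have [s [le_as xs]] := in_X_right_word_occurs n a Xx w_nil.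
  exists (Posz (s - a + n)) => i range_i.
  rewrite xs // (_ : (Posz (s - a + n) + i)%R = Posz (s - a + `|(i + n%:Z)%R|%N)); last lia.
  by rewrite QE; congr right_word; lia.
by exists r.
Qed.

Lemma right_word_inj w1 w2 : w1 <> [::] -> w2 <> [::] ->
  right_word tau a0 w1 =1 right_word tau a0 w2 -> w1 = w2.
Proof.
wlog le12 : w1 w2 / size w1 <= size w2.
  move=> hwlog w1_nil w2_nil E; case: (leqP (size w1) (size w2)) => [le | /ltnW le].
    exact: hwlog.
  by apply/esym/hwlog => // n; rewrite E.
move=> w1_nil w2_nil E; case: (ltnP (size w1) (size w2)) => [lt12 | ge12].
  case: (right_word_not_eventually_periodic (a := size w1) (p := size w2 - size w1) w1_nil).
    by rewrite subn_gt0.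
  move=> k; rewrite subnKC ?(ltnW lt12) //.
  exact: (same_right_word_shift tau_nonerasing k w1_nil w2_nil E).
apply: (@eq_from_nth _ a0) => [|i lt_i]; first by apply/eqP; rewrite eqn_leq le12.
rewrite -(right_word_wing tau_nonerasing a0 w1_nil lt_i) E.
by rewrite right_word_wing // (leq_trans lt_i le12).
Qed.

End Primitive.

Theorem mainTheorem6 (A : finType) (a0 : A) (tau : A -> seq A)
  (g1 g2 : gen_triple A) :
  primitive tau -> aperiodic tau ->
  generator tau g1 -> generator tau g2 ->
  (right_tail_eq (completion tau a0 g1) (completion tau a0 g2) <->
   exists g1' g2' : gen_triple A,
     G_related tau g1' g1 /\ G_related tau g2' g2 /\ rwing g1' = rwing g2').
Proof.
move=> prim aper gen_g1 gen_g2; have nonerasing := prim.1.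
rewrite right_tail_eq_completion.
split=> [[s [t E]] | [g1' [g2' [rel1 [rel2 same_wing]]]]].
  have [g1' [gen_g1' reach1 E1]] := generator_ext_rightn nonerasing a0 s gen_g1.
  have [g2' [gen_g2' reach2 E2]] := generator_ext_rightn nonerasing a0 t gen_g2.
  exists g1', g2'; split; first exact: G_related_ext_reach.
  split; first exact: G_related_ext_reach.
  apply: (right_word_inj (a0 := a0) prim aper
           (generator_rwing gen_g1') (generator_rwing gen_g2')).
  by move=> n; rewrite E1 E2 E.
apply: shift_equiv_trans (shift_equiv_sym (G_related_shift_equiv nonerasing a0 rel1)) _.
by rewrite same_wing; apply: (G_related_shift_equiv nonerasing a0 rel2).
Qed.
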